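(* Let $\alpha,\beta,\gamma,\delta,\epsilon,\mu$ be parameters and let $$A_0=\begin{pmatrix}\alpha&\beta&\gamma\\\beta&\epsilon&\delta\\\gamma&\delta&\mu\end{pmatrix},\qquad A_1=\begin{pmatrix}\alpha_1&\beta_1&\gamma_1\\\beta_1&\epsilon_1&\delta_1\\\gamma_1&\delta_1&\mu_1\end{pmatrix},$$ with $\alpha_1=\alpha\epsilon-\beta^2$, $\beta_1=2\alpha\delta-2\beta\gamma$, $\gamma_1=\beta\delta-\gamma\epsilon$, $\epsilon_1=4\alpha\mu-4\gamma^2$, $\delta_1=2\beta\mu-2\gamma\delta$, $\mu_1=\epsilon\mu-\delta^2$. Put $\mathbf{X}=(x^2,x,1)^T$, $\mathbf{Y}=(y^2,y,1)^T$ and $I(x,y)=\dfrac{\mathbf{X}^TA_0\mathbf{Y}}{\mathbf{X}^TA_1\mathbf{Y}}$. Consider the maps $\Psi,\Psi_1:(x,y)\mapsto(\bar x,\bar y)$ given respectively by $$\Psi:\quad \bar x=y,\qquad \bar y=-\frac{2\gamma y^2+2\delta y+2\mu+x(\beta y^2+\epsilon y+\delta)}{\beta y^2+\epsilon y+\delta+2x(\alpha y^2+\beta y+\gamma)},$$ $$\Psi_1:\quad \bar x=y,\qquad \bar y=-\frac{2\gamma_1 y^2+2\delta_1 y+2\mu_1+x(\beta_1 y^2+\epsilon_1 y+\delta_1)}{\beta_1 y^2+\epsilon_1 y+\delta_1+2x(\alpha_1 y^2+\beta_1 y+\gamma_1)}.$$ Then both $\Psi$ and $\Psi_1$ preserve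 $I^2$ (i.e. $I(\bar x,\bar y)^2=I(x,y)^2$). Moreover $\Psi$ is anti measure-preserving and $\Psi_1$ is measure-preserving, both with density $m(x,y)=\left(\mathbf{X}^TA_0\mathbf{Y}\right)^{-1}$.
   Context: A map $(x,y)\mapsto(\bar x,\bar y)$ with Jacobian determinant $J=\det\frac{\partial(\bar x,\bar y)}{\partial(x,y)}$ is measure-preserving with density $m$ if $J=\dfrac{m(x,y)}{m(\bar x,\bar y)}$, and anti measure-preserving with density $m$ if $J=-\dfrac{m(x,y)}{m(\bar x,\bar y)}$. *)

From Stdlib Require Import Reals.
From Coquelicot Require Import Coquelicot.
Open Scope R_scope.

(* X^T A Y with X = (x^2,x,1)^T, Y = (y^2,y,1)^T and
   A = [[a,b,g],[b,e,d],[g,d,m]]  (a=alpha, b=beta, g=gamma, d=delta,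
   e=epsilon, m=mu), written out entrywise. *)
Definition formA0 (a b g d e m : R) (x y : R) : R :=
  x^2 * (a * y^2 + b * y + g) + x * (b * y^2 + e * y + d) + (g * y^2 + d * y + m).

Definition alpha1 (a b g d e m : R) := a * e - b^2.
Definition beta1 (a b g d e m : R) := 2 * a * d - 2 * b * g.
Definition gamma1 (a b g d e m : R) := b * d - g * e.
Definition eps1 (a b g d e m : R) := 4 * a * m - 4 * g^2.
Definition delta1 (a b g d e m : R) := 2 * b * m - 2 * g * d.
Definition mu1 (a b g d e m : R) := e * m - d^2.

Definition Iinv (a b g d e m : R) (x y : R) : R :=
  formA0 a b g d e m x y /
  formA0 (alpha1 a b g d e m) (beta1 a b g d e m) (gamma1 a b g d e m)
       (delta1 a b g d e m) (eps1 a b g d e m) (mu1 a b g d e m) x y.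

Definition map_den (a b g d e m : R) (x y : R) : R :=
  b * y^2 + e * y + d + 2 * x * (a * y^2 + b * y + g).
Definition map_x (a b g d e m : R) (x y : R) : R := y.
Definition map_y (a b g d e m : R) (x y : R) : R :=
  - ((2 * g * y^2 + 2 * d * y + 2 * m + x * (b * y^2 + e * y + d)) /
     map_den a b g d e m x y).

Definition Psi_x (a b g d e m : R) := map_x a b g d e m.
Definition Psi_y (a b g d e m : R) := map_y a b g d e m.
Definition Psi_den (a b g d e m : R) := map_den a b g d e m.
Definition Psi1_x (a b g d e m : R) :=
  map_x (alpha1 a b g d e m) (beta1 a b g d e m) (gamma1 a b g d e m)
        (delta1 a b g d e m) (eps1 a b g d e m) (mu1 a b g d e m).
Definition Psi1_y (a b g d e m : R) :=
  map_y (alpha1 a b g d e m) (beta1 a b g d e m) (gamma1 a b g d e m)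
        (delta1 a b g d e m) (eps1 a b g d e m) (mu1 a b g d e m).
Definition Psi1_den (a b g d e m : R) :=
  map_den (alpha1 a b g d e m) (beta1 a b g d e m) (gamma1 a b g d e m)
        (delta1 a b g d e m) (eps1 a b g d e m) (mu1 a b g d e m).

Definition partials_exist (f h : R -> R -> R) (x y : R) : Prop :=
  ex_derive (fun t => f t y) x /\ ex_derive (fun t => f x t) y /\
  ex_derive (fun t => h t y) x /\ ex_derive (fun t => h x t) y.

Definition jacobian (f h : R -> R -> R) (x y : R) : R :=
  Derive (fun t => f t y) x * Derive (fun t => h x t) y
  - Derive (fun t => f x t) y * Derive (fun t => h t y) x.

Definition measure_preserving_at (f h mdens : R -> R -> R) (x y : R) : Prop :=
  partials_exist f h x y /\
  jacobian f h x y = mdens x y / mdens (f x y) (h x y).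
Definition anti_measure_preserving_at (f h mdens : R -> R -> R) (x y : R) : Prop :=
  partials_exist f h x y /\
  jacobian f h x y = - (mdens x y / mdens (f x y) (h x y)).

Definition dens (a b g d e m : R) (x y : R) : R := / formA0 a b g d e m x y.

Definition formA1 (a b g d e m : R) :=
  formA0 (alpha1 a b g d e m) (beta1 a b g d e m) (gamma1 a b g d e m)
       (delta1 a b g d e m) (eps1 a b g d e m) (mu1 a b g d e m).

From Stdlib Require Import Reals Lra.
From Coquelicot Require Import Coquelicot.
Open Scope R_scope.

(* Both maps have the shape (x, y) |-> (y, ybar(x, y)), so their Jacobian is
   -d ybar/dx.  Writing X^T A Y = Q x^2 + P x + R with Q, P, R quadratics in y,
   ybar is a Moebius function of x and -d ybar/dx = (P^2 - 4 Q R)/(P + 2 Q x)^2,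
   the x-discriminant over the squared denominator.  Everything then reduces to
   two rational identities: X^T A0 Y is multiplied by -disc/den^2 under Psi and
   by disc_1/den_1^2 under Psi_1, and X^T A1 Y is multiplied by the opposite
   factor, so that I changes sign under both maps. *)

Definition map_disc (a b g d e m y : R) : R :=
  (b * y^2 + e * y + d)^2 - 4 * (a * y^2 + b * y + g) * (g * y^2 + d * y + m).

Lemma is_derive_map_y_x a b g d e m x y :
  map_den a b g d e m x y <> 0 ->
  is_derive (fun t => map_y a b g d e m t y) x
    (- map_disc a b g d e m y / map_den a b g d e m x y ^ 2).
Proof.
  unfold map_y, map_disc, map_den; intro Hden.
  auto_derive; [exact Hden | field; exact Hden].
Qed.

Lemma partials_exist_map a b g d e m x y :
  map_den a b g d e m x y <> 0 ->
  partials_exist (map_x a b g d e m) (map_y a b g d e m) x y.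
Proof.
  intro Hden; unfold partials_exist, map_x.
  split; [auto_derive; auto|].
  split; [auto_derive; auto|].
  split; [eexists; exact (is_derive_map_y_x _ _ _ _ _ _ _ _ Hden)|].
  unfold map_y, map_den in *; auto_derive; exact Hden.
Qed.

Lemma jacobian_map a b g d e m x y :
  map_den a b g d e m x y <> 0 ->
  jacobian (map_x a b g d e m) (map_y a b g d e m) x y
  = map_disc a b g d e m y / map_den a b g d e m x y ^ 2.
Proof.
  intro Hden; unfold jacobian, map_x.
  replace (Derive (fun t => map_y a b g d e m t y) x)
    with (- map_disc a b g d e m y / map_den a b g d e m x y ^ 2)
    by (symmetry; exact (is_derive_unique _ _ _ (is_derive_map_y_x _ _ _ _ _ _ _ _ Hden))).
  rewrite Derive_const, Derive_id.
  field; exact Hden.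
Qed.

Lemma dens_ratio a b g d e m x y x' y' :
  formA0 a b g d e m x y <> 0 -> formA0 a b g d e m x' y' <> 0 ->
  dens a b g d e m x y / dens a b g d e m x' y'
  = formA0 a b g d e m x' y' / formA0 a b g d e m x y.
Proof. unfold dens; intros H H'; field; auto. Qed.

Lemma formA0_Psi a b g d e m x y :
  Psi_den a b g d e m x y <> 0 ->
  formA0 a b g d e m (Psi_x a b g d e m x y) (Psi_y a b g d e m x y)
  = - (map_disc a b g d e m y / Psi_den a b g d e m x y ^ 2)
    * formA0 a b g d e m x y.
Proof.
  unfold Psi_den, Psi_x, Psi_y, map_x, map_y, map_disc, formA0, map_den.
  intro Hden; field; exact Hden.
Qed.

Lemma formA0_Psi1 a b g d e m x y :
  Psi1_den a b g d e m x y <> 0 ->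
  formA0 a b g d e m (Psi1_x a b g d e m x y) (Psi1_y a b g d e m x y)
  = map_disc (alpha1 a b g d e m) (beta1 a b g d e m) (gamma1 a b g d e m)
      (delta1 a b g d e m) (eps1 a b g d e m) (mu1 a b g d e m) y
    / Psi1_den a b g d e m x y ^ 2 * formA0 a b g d e m x y.
Proof.
  unfold Psi1_den, Psi1_x, Psi1_y, map_x, map_y, map_disc, formA0, map_den,
    alpha1, beta1, gamma1, delta1, eps1, mu1.
  intro Hden; field; exact Hden.
Qed.

Lemma formA0_formA1_Psi a b g d e m x y :
  Psi_den a b g d e m x y <> 0 ->
  formA0 a b g d e m (Psi_x a b g d e m x y) (Psi_y a b g d e m x y)
    * formA1 a b g d e m x y
  + formA0 a b g d e m x y
    * formA1 a b g d e m (Psi_x a b g d e m x y) (Psi_y a b g d e m x y) = 0.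
Proof.
  unfold Psi_den, Psi_x, Psi_y, formA1, formA0, map_x, map_y, map_den,
    alpha1, beta1, gamma1, delta1, eps1, mu1.
  intro Hden; field; exact Hden.
Qed.

Lemma formA0_formA1_Psi1 a b g d e m x y :
  Psi1_den a b g d e m x y <> 0 ->
  formA0 a b g d e m (Psi1_x a b g d e m x y) (Psi1_y a b g d e m x y)
    * formA1 a b g d e m x y
  + formA0 a b g d e m x y
    * formA1 a b g d e m (Psi1_x a b g d e m x y) (Psi1_y a b g d e m x y) = 0.
Proof.
  unfold Psi1_den, Psi1_x, Psi1_y, formA1, formA0, map_x, map_y, map_den,
    alpha1, beta1, gamma1, delta1, eps1, mu1.
  intro Hden; field; exact Hden.
Qed.

Lemma Rdiv_opp_of_cross p q r s :
  q <> 0 -> s <> 0 -> p * q + r * s = 0 -> p / s = - (r / q).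
Proof.
  intros Hq Hs Hcross.
  replace p with (- (r * s) / q) by (field_simplify_eq; [lra | exact Hq]).
  field; auto.
Qed.

Lemma Iinv_Psi a b g d e m x y :
  Psi_den a b g d e m x y <> 0 ->
  formA1 a b g d e m x y <> 0 ->
  formA1 a b g d e m (Psi_x a b g d e m x y) (Psi_y a b g d e m x y) <> 0 ->
  Iinv a b g d e m (Psi_x a b g d e m x y) (Psi_y a b g d e m x y)
  = - Iinv a b g d e m x y.
Proof.
  intros Hden H1 H1'.
  exact (Rdiv_opp_of_cross _ _ _ _ H1 H1' (formA0_formA1_Psi _ _ _ _ _ _ _ _ Hden)).
Qed.

Lemma Iinv_Psi1 a b g d e m x y :
  Psi1_den a b g d e m x y <> 0 ->
  formA1 a b g d e m x y <> 0 ->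
  formA1 a b g d e m (Psi1_x a b g d e m x y) (Psi1_y a b g d e m x y) <> 0 ->
  Iinv a b g d e m (Psi1_x a b g d e m x y) (Psi1_y a b g d e m x y)
  = - Iinv a b g d e m x y.
Proof.
  intros Hden H1 H1'.
  exact (Rdiv_opp_of_cross _ _ _ _ H1 H1' (formA0_formA1_Psi1 _ _ _ _ _ _ _ _ Hden)).
Qed.

Theorem corollary4 (a b g d e m : R) :
  (* Psi preserves I^2 *)
  (forall x y : R,
     Psi_den a b g d e m x y <> 0 ->
     formA1 a b g d e m x y <> 0 ->
     formA1 a b g d e m (Psi_x a b g d e m x y) (Psi_y a b g d e m x y) <> 0 ->
     (Iinv a b g d e m (Psi_x a b g d e m x y) (Psi_y a b g d e m x y)) ^ 2
       = (Iinv a b g d e m x y) ^ 2) /\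
  (* Psi_1 preserves I^2 *)
  (forall x y : R,
     Psi1_den a b g d e m x y <> 0 ->
     formA1 a b g d e m x y <> 0 ->
     formA1 a b g d e m (Psi1_x a b g d e m x y) (Psi1_y a b g d e m x y) <> 0 ->
     (Iinv a b g d e m (Psi1_x a b g d e m x y) (Psi1_y a b g d e m x y)) ^ 2
       = (Iinv a b g d e m x y) ^ 2) /\
  (* Psi is anti measure-preserving with density m = (X^T A0 Y)^(-1) *)
  (forall x y : R,
     Psi_den a b g d e m x y <> 0 ->
     formA0 a b g d e m x y <> 0 ->
     formA0 a b g d e m (Psi_x a b g d e m x y) (Psi_y a b g d e m x y) <> 0 ->
     anti_measure_preserving_at (Psi_x a b g d e m) (Psi_y a b g d e m)
       (dens a b g d e m) x y) /\
  (* Psi_1 is measure-preserving with density m = (X^T A0 Y)^(-1) *)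
  (forall x y : R,
     Psi1_den a b g d e m x y <> 0 ->
     formA0 a b g d e m x y <> 0 ->
     formA0 a b g d e m (Psi1_x a b g d e m x y) (Psi1_y a b g d e m x y) <> 0 ->
     measure_preserving_at (Psi1_x a b g d e m) (Psi1_y a b g d e m)
       (dens a b g d e m) x y).
Proof.
  split; [|split; [|split]]; intros x y Hden H H'.
  - rewrite (Iinv_Psi _ _ _ _ _ _ _ _ Hden H H'); ring.
  - rewrite (Iinv_Psi1 _ _ _ _ _ _ _ _ Hden H H'); ring.
  - split; [exact (partials_exist_map _ _ _ _ _ _ _ _ Hden)|].
    rewrite (dens_ratio _ _ _ _ _ _ _ _ _ _ H H').
    rewrite (formA0_Psi _ _ _ _ _ _ _ _ Hden).
    unfold Psi_x, Psi_y, Psi_den in *.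
    rewrite (jacobian_map _ _ _ _ _ _ _ _ Hden).
    field; split; auto.
  - split; [exact (partials_exist_map _ _ _ _ _ _ _ _ Hden)|].
    rewrite (dens_ratio _ _ _ _ _ _ _ _ _ _ H H').
    rewrite (formA0_Psi1 _ _ _ _ _ _ _ _ Hden).
    unfold Psi1_x, Psi1_y, Psi1_den in *.
    rewrite (jacobian_map _ _ _ _ _ _ _ _ Hden).
    field; split; auto.
Qed.
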